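(* Let $X(t)$ satisfy (A1)–(A2), let $\mathbf v:\mathcal S_n\to\mathbb R^d$, and let $F^{\mathbf v}_k(t,\mathbf x)=\mathbb P\{X(t)=k,\ \mathbf L^{\mathbf v}(t)\le\mathbf x\}$. Then for every $k\in\mathcal S_n$ and every $\mathbf x\in\mathbb R^d\setminus\partial\mathbb R_+^d$, \[ \lim_{t\to0^+}F^{\mathbf v}_k(t,\mathbf x)=\mathbb 1_{\mathbb R_+^d}(\mathbf x)\,\mathbb P\{X(0)=k\}=F^{\mathbf v}_k(0,\mathbf x). \]
   Context: $\mathbb R_+^d=[0,\infty)^d$ and $\partial\mathbb R_+^d$ is its topological boundary in $\mathbb R^d$. (A1): $\{X(t)\}_{t\ge0}$ is a regular jump Markov process on $(\Omega,\mathcal F,\mathbb P)$ with values in $\mathcal S_n=\{1,\dots,n\}$, right-continuous trajectories, transition rates $q_{ij}(t)$. (A2): $Q(t)=(q_{ij}(t))$ is conservative ($q_i(t):=-q_{ii}(t)=\sum_{j\ne i}q_{ij}(t)$), continuous and bounded on $[0,\infty)$, and for each $i$ either $q_i\equiv0$ or $q_i>0$ everywhere with $\int_0^\infty q_i=\infty$. $\mathbf L^{\mathbf v}(t)=\int_0^t\mathbf v(X(s))\,ds$; comparisons componentwise. *)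

From HB Require Import structures.
From mathcomp Require Import all_boot all_order all_algebra.
From mathcomp Require Import all_classical all_reals all_analysis.
Set Implicit Arguments. Unset Strict Implicit. Unset Printing Implicit Defensive.
Import Order.TTheory GRing.Theory Num.Theory.
Import numFieldNormedType.Exports.
Local Open Scope classical_set_scope.
Local Open Scope ring_scope.

(* The state space S_n = {1,...,n} is represented by 'I_n = {0,...,n-1}.
   The process X is indexed by real time t; only t >= 0 is relevant. *)

Section Defs.
Context {R : realType} {d0 : measure_display} {Omega : measurableType d0}.
Context (P : probability Omega R) (n : nat).

Definition state_event (X : R -> Omega -> 'I_n) (t : R) (i : 'I_n) : set Omega :=
  [set w | X t w = i].

Definition adapted_process (X : R -> Omega -> 'I_n) : Prop :=
  forall t i, 0 <= t -> measurable (state_event X t i).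

(* right-continuous trajectories (discrete state space) *)
Definition right_continuous_paths (X : R -> Omega -> 'I_n) : Prop :=
  forall w t, 0 <= t -> exists2 e : R, 0 < e &
    forall s, t <= s -> s < t + e -> X s w = X t w.

(* regular (non-explosive) jump process: on every bounded time interval each
   trajectory has finitely many jump times *)
Definition finitely_many_jumps (X : R -> Omega -> 'I_n) : Prop :=
  forall w T, 0 <= T -> exists s : seq R,
    forall t1 t2, 0 <= t1 -> t1 <= t2 -> t2 <= T ->
      (forall u, u \in s -> ~ (t1 < u <= t2)) -> X t1 w = X t2 w.

Definition transition_function (p : R -> R -> 'I_n -> 'I_n -> R) : Prop :=
  [/\ (forall s t i j, 0 <= s -> s <= t -> 0 <= p s t i j),
      (forall s t i, 0 <= s -> s <= t -> \sum_(j < n) p s t i j = 1),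
      (forall s i j, 0 <= s -> p s s i j = (i == j)%:R) &
      (forall s u t i j, 0 <= s -> s <= u -> u <= t ->
         p s t i j = \sum_(l < n) p s u i l * p u t l j)].

Definition markov_with (X : R -> Omega -> 'I_n)
    (p : R -> R -> 'I_n -> 'I_n -> R) : Prop :=
  forall (m : nat) (ts : 'I_m.+1 -> R) (st : 'I_m.+1 -> 'I_n) (t : R) (j : 'I_n),
    0 <= ts ord0 ->
    (forall a b : 'I_m.+1, (a < b)%N -> ts a < ts b) ->
    ts ord_max < t ->
    (P (\bigcap_(a in [set: 'I_m.+1]) state_event X (ts a) (st a) `&` state_event X t j)
    = P (\bigcap_(a in [set: 'I_m.+1]) state_event X (ts a) (st a))
      * (p (ts ord_max) t (st ord_max) j)%:E)%E.

Definition has_rates (p : R -> R -> 'I_n -> 'I_n -> R)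
    (q : R -> 'I_n -> 'I_n -> R) : Prop :=
  forall t i j, 0 <= t ->
    (fun h => (p t (t + h) i j - (i == j)%:R) / h) @ 0^'+ --> q t i j.

Definition A1 (X : R -> Omega -> 'I_n) (q : R -> 'I_n -> 'I_n -> R) : Prop :=
  [/\ adapted_process X, right_continuous_paths X, finitely_many_jumps X &
      exists p, [/\ transition_function p, markov_with X p & has_rates p q]].

Definition qi (q : R -> 'I_n -> 'I_n -> R) (i : 'I_n) (t : R) : R := - q t i i.

Definition A2 (q : R -> 'I_n -> 'I_n -> R) : Prop :=
  [/\ (forall t i, 0 <= t -> qi q i t = \sum_(j < n | j != i) q t i j),
      (forall i j, {within `[0, +oo[, continuous (fun t => q t i j)}),
      (exists M : R, forall t i j, 0 <= t -> `|q t i j| <= M) &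
      (forall i, (forall t, 0 <= t -> qi q i t = 0) \/
                 ((forall t, 0 <= t -> 0 < qi q i t) /\
                  (\int[lebesgue_measure]_(t in `[0%R, +oo[) (qi q i t)%:E = +oo)%E))].

End Defs.

Definition Lv {R : realType} {Omega : Type} {n d : nat}
    (v : 'I_n -> 'I_d -> R) (X : R -> Omega -> 'I_n) (t : R) (w : Omega) : 'I_d -> R :=
  fun i => Rintegral lebesgue_measure `[0, t] (fun s => v (X s w) i).

Definition Fv {R : realType} {d0 : measure_display} {Omega : measurableType d0}
    (P : probability Omega R) {n d : nat}
    (v : 'I_n -> 'I_d -> R) (X : R -> Omega -> 'I_n) (k : 'I_n) (t : R) (x : 'I_d -> R) : R :=
  fine (P [set w | X t w = k /\ forall i, Lv v X t w i <= x i]).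

Definition Rplus {R : realType} (d : nat) : set ('I_d -> R) :=
  [set x | forall i, 0 <= x i].

Definition indic_Rplus {R : realType} {d : nat} (x : 'I_d -> R) : R :=
  \1_(@Rplus R d) x.

(* topological boundary of R_+^d in R^d; R^d = 'I_d -> R carries the product
   topology (= Euclidean topology, d being finite) *)
Definition boundary_Rplus {R : realType} (d : nat) : set ('I_d -> R) :=
  let A : set {ptws 'I_d -> R} := @Rplus R d in
  closure A `\` interior A.

From HB Require Import structures.
From mathcomp Require Import all_boot all_order all_algebra.
From mathcomp Require Import all_classical all_reals all_analysis.
From mathcomp Require Import measurable_realfun.

(* Right-continuity freezes every trajectory near time 0: X(s) = X(0) on [0, t]
   for t small enough (depending on the path), so L^v(t) = t v(X(0)) -> 0.
   Hence, path by path, the event {X(t) = k, L^v(t) <= x} eventually coincides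
   with {X(0) = k} when all x_i > 0 and is eventually empty when some x_i < 0;
   off the boundary of R_+^d one of the two cases holds, and dominated
   convergence turns the pathwise statement into convergence of probabilities.
   These events are measurable because L^v(t) is the pointwise limit of
   right-endpoint Riemann sums, which converge for bounded right-continuous
   integrands. *)

Set Implicit Arguments.
Unset Strict Implicit.
Unset Printing Implicit Defensive.

Import Order.TTheory GRing.Theory Num.Theory.
Import numFieldNormedType.Exports.
Local Open Scope classical_set_scope.
Local Open Scope ring_scope.

Section RightRiemannSum.
Variable R : realType.
Implicit Types (c : R -> R) (t s : R) (m l : nat).

Definition mesh t m : R := t / m.+1%:R.

Definition cell t m l : set R := `]l%:R * mesh t m, l.+1%:R * mesh t m].

Definition right_step c t m s : R :=
  \sum_(l < m.+1) c (l.+1%:R * mesh t m) * \1_(cell t m l) s.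

Definition right_Riemann_sum c t m : R :=
  \sum_(l < m.+1) c (l.+1%:R * mesh t m) * mesh t m.

Lemma mesh_gt0 t m : 0 < t -> 0 < mesh t m.
Proof. by move=> t0; rewrite divr_gt0 // ltr0n. Qed.

Lemma last_gridpoint t m : m.+1%:R * mesh t m = t.
Proof. by rewrite mulrC divfK // pnatr_eq0. Qed.

Lemma mesh_cvg0 t : mesh t m @[m --> \oo] --> 0.
Proof. by rewrite -(mulr0 t); apply: cvgMl_tmp; exact: cvg_harmonic. Qed.

Lemma cell_exists t m s : 0 < t -> 0 < s -> s <= t ->
  exists l : 'I_m.+1, cell t m l s.
Proof.
move=> t0 s0 st.
have ex : exists l, s <= l.+1%:R * mesh t m by exists m; rewrite last_gridpoint.
case: (ex_minnP ex) => l sl minl.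
have lm : (l < m.+1)%N by rewrite ltnS minl // last_gridpoint.
exists (Ordinal lm); rewrite /cell /= in_itv /= sl andbT.
case: l sl minl {lm} => [|l] _ minl; first by rewrite mul0r.
by rewrite ltNge; apply/negP => /minl; rewrite ltnn.
Qed.

Lemma cell_inj t m l j s : 0 < t -> cell t m l s -> cell t m j s -> l = j.
Proof.
move=> t0; rewrite /cell /= !in_itv /= => /andP[ls sl] /andP[js sj].
have lt_grid a b : a%:R * mesh t m < b%:R * mesh t m -> (a < b)%N.
  by rewrite ltr_pM2r ?mesh_gt0 // ltr_nat.
apply/eqP; rewrite eqn_leq -ltnS (lt_grid _ _ (lt_le_trans ls sj)) /= -ltnS.
exact: lt_grid _ _ (lt_le_trans js sl).
Qed.

Lemma cell_gridpoint t m l s : cell t m l s ->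
  s <= l.+1%:R * mesh t m < s + mesh t m.
Proof.
rewrite /cell /= in_itv /= => /andP[ls ->] /=.
by rewrite -natr1 mulrDl mul1r ltrD2r.
Qed.

Lemma cell_subset t m (l : 'I_m.+1) : 0 < t -> cell t m l `<=` `]0, t].
Proof.
move=> t0 s; rewrite /cell /= !in_itv /= => /andP[ls sl]; apply/andP; split.
  by apply: le_lt_trans ls; rewrite mulr_ge0 // ltW // mesh_gt0.
apply: (le_trans sl); rewrite -[leRHS](last_gridpoint t m).
by rewrite ler_wpM2r ?ler_nat // ltW // mesh_gt0.
Qed.

Lemma lebesgue_measure_cell t m l : 0 < t ->
  lebesgue_measure (cell t m l) = (mesh t m)%:E.
Proof.
move=> t0; rewrite lebesgue_measure_itv /= lte_fin ltr_pM2r ?mesh_gt0 // ltr_nat ltnSn.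
by rewrite -EFinB -natr1 mulrDl mul1r addrAC subrr add0r.
Qed.

Lemma right_step_cell c t m (l : 'I_m.+1) s : 0 < t -> cell t m l s ->
  right_step c t m s = c (l.+1%:R * mesh t m).
Proof.
move=> t0 ls; rewrite /right_step (bigD1 l) //= indicE mem_set // mulr1.
rewrite big1 ?addr0 // => j /eqP jl; rewrite indicE memNset ?mulr0 // => js.
by apply: jl; apply: val_inj; exact: cell_inj t0 js ls.
Qed.

Lemma right_step_cvg c t s : 0 < t -> 0 < s -> s <= t ->
  (exists2 e : R, 0 < e & forall u, s <= u -> u < s + e -> c u = c s) ->
  right_step c t m s @[m --> \oo] --> c s.
Proof.
move=> t0 s0 st [e e0 ce].
apply: cvg_near_cst; near=> m.
have [l ls] := cell_exists m t0 s0 st.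
have /andP[sl lse] := cell_gridpoint ls.
rewrite (right_step_cell c t0 ls); apply: ce => //.
apply: lt_trans lse _; rewrite ltrD2l; near: m.
exact: cvgr_lt 0 (mesh_cvg0 t) _ e0.
Unshelve. all: by end_near. Qed.

Lemma measurable_right_step c t m (D : set R) :
  measurable_fun D (right_step c t m).
Proof.
apply: measurable_sum => l; apply: measurable_funM; first exact: measurable_cst.
by apply: measurable_indic; exact: measurable_itv.
Qed.

Lemma integrable_indic_cell t m l :
  lebesgue_measure.-integrable `]0, t] (EFin \o \1_(cell t m l)).
Proof.
apply: (integrableS measurableT); [exact: measurable_itv|by []|].
have /= := integrable_indic_itv (l%:R * mesh t m) (l.+1%:R * mesh t m) false false.
by apply.
Qed.

Lemma integrable_step_cell k t m l : 0 < t ->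
  lebesgue_measure.-integrable `]0, t] (fun s => (k * \1_(cell t m l) s)%:E).
Proof.
move=> t0; have finI : (lebesgue_measure ([set` `]0%R, t]] : set R) < +oo)%E.
  by rewrite lebesgue_measure_itv /= lte_fin t0 -EFinB ltry.
apply: measurable_bounded_integrable => //.
  apply: measurable_funM; first exact: measurable_cst.
  by apply: measurable_indic; exact: measurable_itv.
exists `|k|; split; first exact: num_real.
move=> M kM s _ /=; rewrite normrM indicE (le_trans _ (ltW kM)) //.
by case: (_ \in _); rewrite ?normr1 ?normr0 ?mulr1 ?mulr0.
Qed.

Lemma integral_right_step c t m : 0 < t ->
  (\int[lebesgue_measure]_(s in `]0%R, t]) (right_step c t m s)%:E
   = (right_Riemann_sum c t m)%:E)%E.
Proof.
move=> t0; under eq_integral do rewrite -sumEFin.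
rewrite integral_sum //; last first.
  by move=> l; exact: integrable_step_cell.
rewrite -sumEFin; apply: eq_bigr => l _.
under eq_integral do rewrite EFinM.
rewrite integralZl ?integrable_indic_cell // integral_indic //; last first.
  exact: measurable_itv.
rewrite setIidl; last exact: cell_subset.
transitivity ((c (l.+1%:R * mesh t m))%:E * (mesh t m)%:E)%E; last by [].
by congr (_ * _)%E; exact: lebesgue_measure_cell.
Qed.

Lemma cvg_right_Riemann_sum c t (M : R) : 0 < t -> (forall s, `|c s| <= M) ->
  (forall s, 0 < s -> exists2 e : R, 0 < e &
     forall u, s <= u -> u < s + e -> c u = c s) ->
  right_Riemann_sum c t m @[m --> \oo] --> Rintegral lebesgue_measure `[0, t] c.
Proof.
move=> t0 cM c_rc.
pose D : set R := [set` `]0, t]].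
have mD : measurable D by exact: measurable_itv.
have finD : (lebesgue_measure D < +oo)%E.
  by rewrite lebesgue_measure_itv /= lte_fin t0 -EFinB ltry.
have step_cvg s : D s -> right_step c t m s @[m --> \oo] --> c s.
  by rewrite /D /= in_itv /= => /andP[s0 st]; exact: right_step_cvg t0 s0 st (c_rc s s0).
have mc : measurable_fun D c.
  by apply: measurable_fun_cvg step_cvg => m; exact: measurable_right_step.
have step_le m s : D s -> `|right_step c t m s| <= M.
  rewrite /D /= in_itv /= => /andP[s0 st].
  by have [l ls] := cell_exists m t0 s0 st; rewrite (right_step_cell c t0 ls) cM.
have mstep m : measurable_fun D (EFin \o right_step c t m).
  by apply/measurable_EFinP; exact: measurable_right_step.
have mEc : measurable_fun D (EFin \o c) by exact/measurable_EFinP.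
have step_ecvg : {ae lebesgue_measure, forall s, D s ->
    (EFin \o right_step c t m) s @[m --> \oo] --> (EFin \o c) s}.
  by apply: aeW => s Ds; apply/fine_cvgP; split; [exact: nearW|exact: step_cvg].
have intM : lebesgue_measure.-integrable D (EFin \o cst M).
  by apply: measurable_bounded_integrable => //; exact: bounded_cst.
have step_dom : {ae lebesgue_measure, forall s m, D s ->
    (`|(EFin \o right_step c t m) s| <= (EFin \o cst M) s)%E}.
  by apply: aeW => s m Ds; rewrite /= lee_fin step_le.
have [intc _ cvg_int] := @dominated_convergence _ _ _ lebesgue_measure D mD _ _ _
  mstep mEc step_ecvg intM step_dom.
rewrite -Rintegral_itv_obnd_cbnd //.
move: cvg_int; rewrite -(fineK (@integrable_fin_num _ _ _ lebesgue_measure D mD _ intc)).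
rewrite (_ : (fun m => _) = (fun m => (right_Riemann_sum c t m)%:E)); last first.
  by apply/funext => m; rewrite integral_right_step.
by move/fine_cvg.
Qed.

End RightRiemannSum.

Lemma cvg_seq_at_right (R : realType) (u : R^nat) (p : R) :
  (forall m, p < u m) -> u @ \oo --> p -> u @ \oo --> p^'+.
Proof. by move=> up ucv A /ucv [N _ uA]; exists N => // m /uA; apply; exact: up. Qed.

Lemma cvg_measure_eventually_eq d (T : measurableType d) (R : realType)
    (mu : {finite_measure set T -> \bar R}) (A : (set T)^nat) (B : set T) :
  (forall m, measurable (A m)) -> measurable B ->
  (forall w, \forall m \near \oo, A m w <-> B w) ->
  fine (mu (A m)) @[m --> \oo] --> fine (mu B).
Proof.
move=> mA mB AB.
pose ind (S : set T) w : \bar R := (\1_S w)%:E.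
have mind S : measurable S -> measurable_fun setT (ind S).
  by move=> mS; apply/measurable_EFinP; exact: measurable_indic.
have ind_cvg : {ae mu, forall w, setT w -> ind (A m) w @[m --> \oo] --> ind B w}.
  apply: aeW => w _; apply: cvg_near_cst; apply: filterS (AB w) => m ABm.
  rewrite /ind !indicE; congr ((nat_of_bool _)%:R)%:E.
  by apply/idP/idP => /set_mem/ABm/mem_set.
have ind_le1 : {ae mu, forall w m, setT w -> (`|ind (A m) w| <= (cst 1%R w)%:E)%E}.
  apply: aeW => w m _; rewrite /ind /= lee_fin indicE.
  by case: (_ \in _); rewrite ?normr1 ?normr0.
have [_ _] := dominated_convergence measurableT (fun m => mind _ (mA m)) (mind _ mB)
  ind_cvg (finite_measure_integrable_cst mu 1 measurableT) ind_le1.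
rewrite /ind integral_indic // setIT.
rewrite (_ : (fun m => _) = (fun m => mu (A m))); last first.
  by apply/funext => m; rewrite integral_indic // setIT.
by move=> cvg_mu; apply: fine_cvg; rewrite fineK // fin_num_measure.
Qed.

Section PathIntegral.
Context {R : realType} {d0 : measure_display} {Omega : measurableType d0}.
Variables (n d : nat) (X : R -> Omega -> 'I_n) (v : 'I_n -> 'I_d -> R).

Lemma Lv_frozen t w i : 0 <= t ->
  (forall s, 0 <= s -> s <= t -> X s w = X 0 w) -> Lv v X t w i = t * v (X 0 w) i.
Proof.
move=> t0 frozen; rewrite /Lv (@eq_Rintegral _ _ _ _ _ (cst (v (X 0 w) i))); last first.
  by move=> s; rewrite inE /= in_itv /= => /andP[s0 st]; rewrite frozen.
rewrite Rintegral_cst; last exact: measurable_itv.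
rewrite mulrC; congr (_ * _).
suff len_t : fine (lebesgue_measure ([set` `[0%R, t]] : set R)) = t by exact: len_t.
rewrite lebesgue_measure_itv /= lte_fin; case: ifPn => [_|]; first by rewrite /= subr0.
by rewrite -leNgt => t_le0; apply/esym/le_anti; rewrite t_le0 t0.
Qed.

Lemma Lv0 w i : Lv v X 0 w i = 0.
Proof.
rewrite (Lv_frozen i (lexx 0)) ?mul0r // => s s0 s_le0.
by have -> : s = 0 by apply/le_anti; rewrite s_le0 s0.
Qed.

Definition Fv_event k x t : set Omega :=
  [set w | X t w = k /\ forall i, Lv v X t w i <= x i].

Hypothesis rcX : right_continuous_paths X.

Lemma path_frozen_near0 w :
  \forall t \near 0^'+, forall s, 0 <= s -> s <= t -> X s w = X 0 w.
Proof.
have [e e0 frozen] := rcX w (lexx 0).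
near=> t => s s0 st; apply: frozen s0 _; rewrite add0r; apply: le_lt_trans st _.
by near: t; exact: nbhs_right_lt.
Unshelve. all: by end_near. Qed.

Lemma Lv_cvg0 w i : Lv v X t w i @[t --> 0^'+] --> 0.
Proof.
have Lv_near : \forall t \near 0^'+, t * v (X 0 w) i = Lv v X t w i.
  near=> t; apply/esym/Lv_frozen; first by near: t; exact: nbhs_right_ge.
  by near: t; exact: path_frozen_near0.
apply: cvg_trans (near_eq_cvg Lv_near) _.
have t_cvg0 : t @[t --> 0^'+] --> (0 : R).
  exact: cvg_within.
by have := cvgMr_tmp (b := v (X 0 w) i) t_cvg0; rewrite mul0r; apply.
Unshelve. all: by end_near. Qed.

Hypothesis adX : adapted_process X.

Lemma measurable_state_value t i : 0 <= t ->
  measurable_fun setT (fun w => v (X t w) i).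
Proof.
move=> t0; have -> : (fun w => v (X t w) i) =
    (fun w => \sum_(j < n) v j i * \1_(state_event X t j) w).
  apply/funext => w; rewrite (bigD1 (X t w)) //= indicE mem_set // mulr1.
  rewrite big1 ?addr0 // => j /eqP jX; rewrite indicE memNset ?mulr0 //.
  by move=> /= Xj; apply: jX.
apply: measurable_sum => j; apply: measurable_funM; first exact: measurable_cst.
by apply: measurable_indic; exact: adX.
Qed.

Lemma measurable_Lv t i : 0 < t -> measurable_fun setT (fun w => Lv v X t w i).
Proof.
move=> t0; apply: (measurable_fun_cvg
  (h := fun m w => right_Riemann_sum (fun s => v (X s w) i) t m)).
  move=> m; apply: measurable_sum => l; apply: measurable_funM; last first.
    exact: measurable_cst.
  by apply: measurable_state_value; rewrite mulr_ge0 // ltW // mesh_gt0.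
move=> w _; apply: (cvg_right_Riemann_sum (M := \sum_(j < n) `|v j i|) t0).
  by move=> s; rewrite (bigD1 (X s w)) //= lerDl sumr_ge0.
move=> s s0; have [e e0 frozen] := rcX w (ltW s0).
by exists e => // u su ue; rewrite frozen.
Qed.

Lemma measurable_Fv_event k x t : 0 < t -> measurable (Fv_event k x t).
Proof.
move=> t0; have -> : Fv_event k x t = state_event X t k `&`
    \bigcap_(i in [set: 'I_d]) ((fun w => Lv v X t w i) @^-1` `]-oo, x i]).
  apply/seteqP; split => w /=.
    by move=> [Xk Lx]; split => // i _ /=; rewrite in_itv /= Lx.
  by move=> [Xk Lx]; split => // i; have := Lx i I; rewrite /= in_itv.
apply: measurableI; first by apply: adX; exact: ltW.
apply: fin_bigcap_measurable; first exact: finite_finset.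
move=> i _; rewrite -[X in measurable X]setTI.
by apply: measurable_Lv => //; exact: measurable_itv.
Qed.

End PathIntegral.

Section Fv_near0.
Context {R : realType} {d0 : measure_display} {Omega : measurableType d0}.
Variables (P : probability Omega R) (n d : nat).
Variables (X : R -> Omega -> 'I_n) (v : 'I_n -> 'I_d -> R).

Lemma Fv_at0 k x : Fv P v X k 0 x = indic_Rplus x * fine (P [set w | X 0 w = k]).
Proof.
rewrite /Fv /indic_Rplus indicE; have [x_ge0|x_Ngt0] := pselect (Rplus x).
  rewrite mem_set // mul1r; congr (fine (P _)); apply/seteqP; split => w /=.
    by case.
  by move=> ->; split => // i; rewrite Lv0; exact: x_ge0.
rewrite memNset // mul0r (_ : [set w | _] = set0) ?measure0 //.
apply/seteqP; split => w //= [_ Lx]; apply: x_Ngt0 => i.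
by rewrite -(Lv0 X v w i); exact: Lx.
Qed.

Hypotheses (adX : adapted_process X) (rcX : right_continuous_paths X).

Lemma cvg_Fv_near0 k x (B : set Omega) : measurable B ->
  (forall w, \forall t \near 0^'+, Fv_event X v k x t w <-> B w) ->
  Fv P v X k t x @[t --> 0^'+] --> fine (P B).
Proof.
move=> mB FB; apply/cvg_at_rightP => u [u0 ucv].
apply: cvg_measure_eventually_eq => // [m|w]; first exact: measurable_Fv_event.
exact: cvg_seq_at_right u0 ucv _ (FB w).
Qed.

Lemma cvg_Fv_interior k (x : 'I_d -> R) : (forall i, 0 < x i) ->
  Fv P v X k t x @[t --> 0^'+] --> fine (P [set w | X 0 w = k]).
Proof.
move=> x_gt0; apply: cvg_Fv_near0; first exact: adX.
move=> w; near=> t; rewrite /Fv_event /=.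
have -> : X t w = X 0 w.
  near: t; apply: filterS2 (path_frozen_near0 rcX w) (nbhs_right_ge 0).
  by move=> t frozen t0; exact: frozen.
split=> [[]//|Xk]; split=> // i; move: i; near: t.
apply: filter_forall => i; exact: cvgr_le 0 (Lv_cvg0 v rcX w i) _ (x_gt0 i).
Unshelve. all: by end_near. Qed.

Lemma cvg_Fv_exterior k (x : 'I_d -> R) i : x i < 0 -> Fv P v X k t x @[t --> 0^'+] --> 0.
Proof.
move=> xi_lt0; have := @cvg_Fv_near0 k x set0 measurable0.
rewrite measure0; apply=> w.
apply: filterS (cvgr_gt 0 (Lv_cvg0 v rcX w i) _ xi_lt0) => t xi_lt_Lv.
by split=> // -[_ /(_ i)]; rewrite leNgt xi_lt_Lv.
Qed.

End Fv_near0.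

Lemma interior_Rplus_gt0 (R : realType) (d : nat) (x : 'I_d -> R) :
  interior (@Rplus R d : set {ptws 'I_d -> R}) x -> forall i, 0 < x i.
Proof.
move=> intx i.
have xE : dfwith x i (x i) = x.
  by apply: functional_extensionality_dep => j; case: dfwithP.
have near_xi : nbhs (x i) ((@dfwith 'I_d (fun _ => R) x i) @^-1` (@Rplus R d)).
  apply: (@dfwith_continuous 'I_d (fun _ => R) x i (x i)).
  by rewrite xE.
have left_ge0 : \forall y \near (x i)^'-, 0 <= y.
  by apply: cvg_within; apply: filterS near_xi => y /= /(_ i); rewrite dfwithin.
have [y [yx y0]] := filter_ex (filterI (nbhs_left_lt (x i)) left_ge0).
exact: le_lt_trans y0 yx.
Qed.

Lemma not_boundary_Rplus (R : realType) (d : nat) (x : 'I_d -> R) :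
  ~ boundary_Rplus x -> (forall i, 0 < x i) \/ (exists i, x i < 0).
Proof.
move=> nbx.
have [intx|Nintx] := pselect (interior (@Rplus R d : set {ptws 'I_d -> R}) x).
  by left; exact: interior_Rplus_gt0.
right; have Nx : ~ Rplus x.
  by move=> x_ge0; apply: nbx; split => //; exact: subset_closure.
have [i /negP] : exists i, ~ 0 <= x i by apply/existsNP; exact: Nx.
by rewrite -ltNge; exists i.
Qed.

Theorem proposition2 (R : realType) (d0 : measure_display) (Omega : measurableType d0)
    (P : probability Omega R) (n d : nat)
    (X : R -> Omega -> 'I_n) (q : R -> 'I_n -> 'I_n -> R)
    (v : 'I_n -> 'I_d -> R) :
  A1 P X q -> A2 q ->
  forall (k : 'I_n) (x : 'I_d -> R),
    ~ (@boundary_Rplus R d) x ->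
    Fv P v X k t x @[t --> 0^'+] --> indic_Rplus x * fine (P [set w | X 0 w = k])
    /\ indic_Rplus x * fine (P [set w | X 0 w = k]) = Fv P v X k 0 x.
Proof.
move=> [adX rcX _ _] _ k x nbx; split; last by rewrite Fv_at0.
have [x_gt0|[i xi_lt0]] := not_boundary_Rplus nbx.
- rewrite /indic_Rplus indicE mem_set ?mul1r; last by move=> i; exact: ltW.
  exact: cvg_Fv_interior.
- rewrite /indic_Rplus indicE memNset ?mul0r; last by move/(_ i); rewrite leNgt xi_lt0.
  exact: cvg_Fv_exterior xi_lt0.
Qed.
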